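(* The ordinary differential equation $$z''+\Big(2\frac{w'}{w}+\frac1r\Big)z'-2w^2z=0,\qquad r\in(0,\infty),$$ admits two linearly independent real solutions $z_{1,0},z_{2,0}$ such that $z_{1,0}(r)=O(1)$ as $r\to0^+$ and $z_{1,0}(r)=O(r^{-1/2}e^{\sqrt2 r})$ as $r\to\infty$, while $z_{2,0}(r)=O(r^{-2})$ as $r\to0^+$ and $z_{2,0}(r)=O(r^{-1/2}e^{-\sqrt2 r})$ as $r\to\infty$.
   Context: Let $w:[0,\infty)\to\mathbb{R}$ be the unique solution of $w''+\frac1r w'-\frac1{r^2}w+(1-w^2)w=0$ on $(0,\infty)$ with $w(0)=0$ and $w(r)\to1$ as $r\to\infty$; it satisfies $0<w<1$ and $w'>0$ on $(0,\infty)$, $w(r)=\alpha r+O(r^3)$ as $r\to0^+$ for some $\alpha>0$, and $w(r)=1-\frac{1}{2r^2}+O(r^{-4})$, $w'(r)=r^{-3}+O(r^{-5})$ as $r\to\infty$. *)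

From Stdlib Require Import Reals.
From Coquelicot Require Import Coquelicot.
Open Scope R_scope.

Definition twice_diff_pos (f : R -> R) : Prop :=
  forall r, 0 < r -> ex_derive f r /\ ex_derive (Derive f) r.

Definition bigO_at_0plus (f g : R -> R) : Prop :=
  exists C d, 0 < d /\ forall r, 0 < r < d -> Rabs (f r) <= C * Rabs (g r).

Definition bigO_at_infty (f g : R -> R) : Prop :=
  exists C M, forall r, M < r -> Rabs (f r) <= C * Rabs (g r).

Definition is_profile (w : R -> R) : Prop :=
  twice_diff_pos w /\
  (forall r, 0 < r ->
     Derive (Derive w) r + / r * Derive w r - / (r ^ 2) * w r
       + (1 - (w r) ^ 2) * w r = 0) /\
  w 0 = 0 /\
  is_lim w 0 0 /\
  is_lim w p_infty 1 /\
  (forall r, 0 < r -> 0 < w r < 1) /\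
  (forall r, 0 < r -> 0 < Derive w r) /\
  (exists alpha, 0 < alpha /\
     bigO_at_0plus (fun r => w r - alpha * r) (fun r => r ^ 3)) /\
  bigO_at_infty (fun r => w r - (1 - / (2 * r ^ 2))) (fun r => / (r ^ 4)) /\
  bigO_at_infty (fun r => Derive w r - / (r ^ 3)) (fun r => / (r ^ 5)).

Definition solves_z_ode (w z : R -> R) : Prop :=
  twice_diff_pos z /\
  forall r, 0 < r ->
    Derive (Derive z) r + (2 * Derive w r / w r + / r) * Derive z r
      - 2 * (w r) ^ 2 * z r = 0.

Definition lin_indep_pos (z1 z2 : R -> R) : Prop :=
  forall c1 c2 : R, (forall r, 0 < r -> c1 * z1 r + c2 * z2 r = 0) ->
    c1 = 0 /\ c2 = 0.

From Stdlib Require Import Reals Lra Psatz Lia Factorial Classical Ranalysis5.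
From Coquelicot Require Import Coquelicot.
Open Scope R_scope.

(* Multiplied by [r w^2], the equation becomes [(r w^2 z')' = 2 r w^4 z].  Picard
   iteration from [z = 1] produces iterates bounded by [r^(2n) / n!], so their sum [z1]
   converges locally uniformly, solves the equation and satisfies [1 <= z1 <= exp (r^2)].
   Reduction of order gives the second solution [z2 = z1 * (L - I)] with
   [I r = int_1^r ds / (s w^2 z1^2)] and [L = lim I]; since [w ~ alpha r] at [0],
   [I = O(r^-2)] there.  At infinity, [Y = sqrt r * w * z1] has a logarithmic derivative
   solving the Riccati equation [rho' = 3 w^2 - 1 + 3 / (4 r^2) - rho^2], whose potential
   tends to [2]; the barriers [sqrt 2 + 1 / r^2 + B exp (-2 sqrt 2 r)] and
   [sqrt 2 - 8 / r^2] show that [Y] is comparable to [exp (sqrt 2 r)].  This gives the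
   bound on [z1] and makes [L - I = O(exp (-2 sqrt 2 r))], whence the decay of [z2]. *)

Lemma nondecr_of_is_derive (f df : R -> R) (a b : R) :
  a <= b -> (forall x, a <= x <= b -> is_derive f x (df x)) ->
  (forall x, a <= x <= b -> 0 <= df x) -> f a <= f b.
Proof.
  intros Hab Hd Hp.
  destruct (MVT_gen f a b df) as [c [Hc Heq]];
    rewrite ?Rmin_left, ?Rmax_right in * by lra.
  - intros x Hx; apply Hd; lra.
  - intros x Hx. apply derivable_continuous_pt. exists (df x).
    apply is_derive_Reals, Hd; lra.
  - assert (0 <= df c) by (apply Hp; lra). nra.
Qed.

Lemma nonincr_of_is_derive (f df : R -> R) (a b : R) :
  a <= b -> (forall x, a <= x <= b -> is_derive f x (df x)) ->
  (forall x, a <= x <= b -> df x <= 0) -> f b <= f a.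
Proof.
  intros Hab Hd Hp.
  enough (- f a <= - f b) by lra.
  apply (nondecr_of_is_derive (fun x => - f x) (fun x => - df x) a b Hab).
  - intros x Hx. apply (is_derive_opp f x (df x)), Hd, Hx.
  - intros x Hx. specialize (Hp x Hx). lra.
Qed.

Lemma pow3_le_exp (r : R) : 0 <= r -> r ^ 3 <= 27 * exp r.
Proof.
  intros Hr.
  set (t := r / 3).
  assert (Ht : t <= exp t) by (pose proof (exp_ineq1_le t); lra).
  assert (He : exp r = exp t * exp t * exp t) by (rewrite <- !exp_plus; f_equal; unfold t; lra).
  assert (0 <= t) by (unfold t; lra).
  replace (r ^ 3) with (27 * (t * t * t)) by (unfold t; field).
  rewrite He. apply Rmult_le_compat_l; [lra|].
  apply Rmult_le_compat; [nra|lra| |lra]. apply Rmult_le_compat; lra.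
Qed.

Lemma inv_sq_mul_exp_unbounded (A r0 : R) : 0 < r0 ->
  exists r, r0 <= r /\ A < 8 / r ^ 2 * exp (r / 2).
Proof.
  intros Hr0. set (r := r0 + 27 * Rabs A + 1). exists r.
  pose proof (Rabs_pos A). pose proof (Rle_abs A).
  assert (Hr : r = r0 + 27 * Rabs A + 1) by reflexivity.
  split; [lra|]. apply Rnot_le_lt. intros HA.
  assert (Hr2 : 0 < r ^ 2) by (apply pow_lt; lra).
  pose proof (pow3_le_exp (r / 2) ltac:(lra)).
  apply Rmult_le_compat_r with (r := r ^ 2) in HA; [|lra].
  replace (8 / r ^ 2 * exp (r / 2) * r ^ 2) with (8 * exp (r / 2)) in HA by (field; lra).
  assert (r * r ^ 2 <= 27 * A * r ^ 2)
    by (replace (r * r ^ 2) with (8 * (r / 2) ^ 3) by field; lra).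
  assert (r <= 27 * A) by (apply Rmult_le_reg_r with (r ^ 2); lra).
  lra.
Qed.

Lemma exp_le_compat (x y : R) : x <= y -> exp x <= exp y.
Proof. intros [H|<-]; [left; apply exp_increasing, H|right; reflexivity]. Qed.

Lemma sqrt2_bounds : 1.41 < sqrt 2 < 1.42.
Proof.
  pose proof (sqrt_sqrt 2 ltac:(lra)). pose proof (sqrt_pos 2). split; nra.
Qed.

Lemma pow_le_one (x : R) (n : nat) : 0 <= x <= 1 -> x ^ n <= 1.
Proof. intros Hx. rewrite <- (pow1 n). apply pow_incr. exact Hx. Qed.

Lemma is_RInt_scal_pow (c : R) (k : nat) (t : R) :
  is_RInt (fun s => c * s ^ S k) 0 t (c * t ^ S (S k) / INR (S (S k))).
Proof.
  replace (c * t ^ S (S k) / INR (S (S k)))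
    with (scal c (t ^ S (S k) / INR (S (S k)) - 0 ^ S (S k) / INR (S (S k)))).
  - apply (is_RInt_scal (V:=R_NormedModule)), is_RInt_pow.
  - assert (INR (S (S k)) <> 0) by (apply not_0_INR; lia).
    change (scal c ?x) with (c * x). rewrite pow_i by lia.
    match goal with |- ?a = ?b => change (@eq R a b) end. field. auto.
Qed.

Lemma is_series_exp (x : R) : is_series (fun n => / INR (fact n) * x ^ n) (exp x).
Proof.
  eapply is_series_ext; [|apply (is_exp_Reals x)]. intros n. simpl.
  change (scal (pow_n x n) (/ INR (fact n))) with (pow_n x n * / INR (fact n)).
  change (pow_n x n) with (x ^ n). ring.
Qed.

Lemma Series_nonneg (a : nat -> R) : (forall n, 0 <= a n) -> ex_series a -> 0 <= Series a.
Proof.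
  intros Ha Hex.
  replace 0 with (Series (fun n => 0 * a n)) at 1 by (rewrite Series_scal_l; ring).
  apply Series_le; auto. intros n. specialize (Ha n). lra.
Qed.

Lemma continuity_pt_of_vanishing_nonpos (g : R -> R) (K : R) :
  (forall t, t <= 0 -> g t = 0) -> (forall t, 0 < t -> continuity_pt g t) ->
  (forall t, 0 < t < 1 -> Rabs (g t) <= K * t) -> forall x, continuity_pt g x.
Proof.
  intros Hneg Hpos Hb x.
  destruct (Rtotal_order x 0) as [Hx|[->|Hx]]; [| |apply Hpos, Hx].
  - apply (continuity_pt_locally_ext (fun _ => 0) g (- x)); [lra| |].
    + intros y Hy. unfold Rdist in Hy. apply Rabs_def2 in Hy. rewrite Hneg; lra.
    + apply continuity_pt_const. intros ??. reflexivity.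
  - intros eps Heps.
    exists (Rmin 1 (eps / (Rabs K + 1))). split.
    { apply Rmin_glb_lt; [lra|]. apply Rdiv_lt_0_compat; [lra|]. pose proof (Rabs_pos K); lra. }
    intros y [_ Hy]. simpl in *. unfold R_dist in *. rewrite Rminus_0_r in Hy.
    rewrite (Hneg 0 (Rle_refl 0)), Rminus_0_r.
    destruct (Rle_lt_dec y 0) as [Hy0|Hy0]; [rewrite Hneg, Rabs_R0; auto|].
    rewrite Rabs_pos_eq in Hy by lra.
    assert (Hy1 : y < 1) by (eapply Rlt_le_trans; [apply Hy|apply Rmin_l]).
    assert (Hye : y < eps / (Rabs K + 1)) by (eapply Rlt_le_trans; [apply Hy|apply Rmin_r]).
    pose proof (Rabs_pos K). pose proof (Rle_abs K).
    apply Rmult_lt_compat_l with (r := Rabs K + 1) in Hye; [|lra].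
    replace ((Rabs K + 1) * (eps / (Rabs K + 1))) with eps in Hye by (field; lra).
    specialize (Hb y ltac:(lra)). nra.
Qed.

Lemma continuity_pt_pow_fun (f : R -> R) (n : nat) (x : R) :
  continuity_pt f x -> continuity_pt (fun y => f y ^ n) x.
Proof.
  intros H. apply (continuity_pt_comp f (fun y => y ^ n)); auto.
  apply derivable_continuous_pt, derivable_pt_pow.
Qed.

Lemma CVU_series_dominated (u : nat -> R -> R) (a : nat -> R) (la c : R) (r : posreal) :
  is_series a la -> (forall n y, Boule c r y -> Rabs (u n y) <= a n) ->
  CVU (fun N y => sum_f_R0 (fun n => u n y) N) (fun y => Series (fun n => u n y)) c r.
Proof.
  intros Ha Hb eps Heps.
  pose proof (proj1 (is_series_Reals a la) Ha) as Hcv.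
  destruct (Hcv eps Heps) as [N HN].
  exists N. intros n y Hn Hy.
  assert (Hex : ex_series (fun k => u k y)).
  { apply (ex_series_le (V:=R_CompleteNormedModule) _ a).
    - intros k. apply (Hb k y Hy).
    - eexists; eauto. }
  assert (Hcu : Un_cv (fun m => SP u m y) (Series (fun k => u k y))).
  { apply is_series_Reals, Series_correct, Hex. }
  eapply Rle_lt_trans.
  { apply (sum_maj1 u a y _ la n Hcu Hcv). intros k. apply Hb, Hy. }
  specialize (HN n Hn). unfold R_dist in HN. apply Rabs_def2 in HN. lra.
Qed.

Lemma CVU_mult_bounded (fn : nat -> R -> R) (f h : R -> R) (K c : R) (r : posreal) :
  CVU fn f c r -> (forall y, Boule c r y -> Rabs (h y) <= K) ->
  CVU (fun n y => h y * fn n y) (fun y => h y * f y) c r.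
Proof.
  intros H Hh eps Heps.
  assert (HK : 0 < Rabs K + 1) by (pose proof (Rabs_pos K); lra).
  destruct (H (eps / (Rabs K + 1))) as [N HN]; [apply Rdiv_lt_0_compat; lra|].
  exists N. intros n y Hn Hy.
  rewrite <- Rmult_minus_distr_l, Rabs_mult.
  specialize (HN n y Hn Hy). specialize (Hh y Hy).
  apply Rmult_lt_compat_l with (r := Rabs K + 1) in HN; [|lra].
  replace ((Rabs K + 1) * (eps / (Rabs K + 1))) with eps in HN by (field; lra).
  pose proof (Rle_abs K). pose proof (Rabs_pos (f y - fn n y)). nra.
Qed.

Lemma CVU_shift (fn : nat -> R -> R) (f : R -> R) (c : R) (d : posreal) :
  CVU fn f c d -> CVU (fun N => fn (S N)) f c d.
Proof.
  intros H eps Heps. destruct (H eps Heps) as [N HN]. exists N.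
  intros n y Hn Hy. apply HN; [lia|exact Hy].
Qed.

Lemma is_derive_sum_f_R0 (u : nat -> R -> R) (du : nat -> R) (y : R) (N : nat) :
  (forall n, is_derive (u n) y (du n)) ->
  is_derive (fun x => sum_f_R0 (fun n => u n x) N) y (sum_f_R0 du N).
Proof.
  intros H. induction N as [|N IH]; [apply H|].
  apply (is_derive_plus (fun x => sum_f_R0 (fun n => u n x) N) (u (S N))); auto.
Qed.

Lemma continuity_pt_sum_f_R0 (u : nat -> R -> R) (y : R) (N : nat) :
  (forall n, continuity_pt (u n) y) ->
  continuity_pt (fun x => sum_f_R0 (fun n => u n x) N) y.
Proof.
  intros H. induction N as [|N IH]; [apply H|].
  apply (continuity_pt_plus (fun x => sum_f_R0 (fun n => u n x) N) (u (S N))); auto.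
Qed.

Lemma Boule_half_bounds (x0 : R) (r : posreal) (y : R) :
  r <= x0 / 2 -> Boule x0 r y -> x0 / 2 <= y <= 3 * x0 / 2.
Proof. intros Hr Hy. unfold Boule in Hy. apply Rabs_def2 in Hy. lra. Qed.

Section Profile.

Variable w : R -> R.
Hypothesis Hw : is_profile w.

Lemma w_ex_derive r : 0 < r -> ex_derive w r.
Proof. intros Hr. apply (proj1 Hw r Hr). Qed.

Lemma w_ex_derive2 r : 0 < r -> ex_derive (Derive w) r.
Proof. intros Hr. apply (proj1 Hw r Hr). Qed.

Lemma w_pos_lt1 r : 0 < r -> 0 < w r < 1.
Proof. apply Hw. Qed.

Lemma w_deriv_pos r : 0 < r -> 0 < Derive w r.
Proof. apply Hw. Qed.

Lemma w_bounds r : 0 <= r -> 0 <= w r <= 1.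
Proof.
  intros [Hr|<-]; [pose proof (w_pos_lt1 r Hr); lra|].
  destruct Hw as (_ & _ & -> & _). lra.
Qed.

Lemma w_continuity_pt r : 0 <= r -> continuity_pt w r.
Proof.
  intros [Hr|<-].
  - apply derivable_continuous_pt. exists (Derive w r).
    apply is_derive_Reals, Derive_correct, w_ex_derive, Hr.
  - apply continuity_pt_filterlim'. destruct Hw as (_ & _ & -> & H0 & _). exact H0.
Qed.

Lemma w_nondecr s t : 0 <= s <= t -> w s <= w t.
Proof.
  intros [[Hs|<-] Hst].
  - apply (nondecr_of_is_derive w (Derive w) s t Hst).
    + intros x Hx. apply Derive_correct, w_ex_derive. lra.
    + intros x Hx. left. apply w_deriv_pos. lra.
  - destruct Hw as (_ & _ & -> & _). apply w_bounds. lra.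
Qed.

Lemma w_ge_linear : exists c, 0 < c /\ forall s, 0 < s <= 1 -> c * s <= w s.
Proof.
  destruct Hw as (_&_&_&_&_&_&_&[al [Hal [C [d [Hd HC]]]]]&_).
  set (s1 := Rmin (d / 2) (Rmin 1 (al / (2 * (Rabs C + 1))))).
  pose proof (Rabs_pos C) as HC0.
  assert (Hs1 : 0 < s1 /\ s1 <= d / 2 /\ s1 <= 1 /\ s1 * (2 * (Rabs C + 1)) <= al).
  { unfold s1. assert (0 < al / (2 * (Rabs C + 1))) by (apply Rdiv_lt_0_compat; lra).
    repeat split.
    - repeat apply Rmin_glb_lt; lra.
    - apply Rmin_l.
    - eapply Rle_trans; [apply Rmin_r|apply Rmin_l].
    - apply Rmult_le_reg_r with (/ (2 * (Rabs C + 1))); [apply Rinv_0_lt_compat; lra|].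
      rewrite Rmult_assoc, Rinv_r, Rmult_1_r by lra.
      eapply Rle_trans; [apply Rmin_r|apply Rmin_r]. }
  destruct Hs1 as (Hs1p & Hs1d & Hs11 & Hs1a).
  assert (Hsmall : forall s, 0 < s <= s1 -> al * s / 2 <= w s).
  { intros s Hs.
    specialize (HC s ltac:(lra)).
    rewrite Rabs_pos_eq with (x := s ^ 3) in HC by (apply pow_le; lra).
    apply Rabs_le_between in HC as [HC _].
    pose proof (Rle_abs C).
    assert (Rabs C * s <= al / 2) by nra.
    assert (Rabs C * s ^ 3 <= al * s / 2).
    { replace (Rabs C * s ^ 3) with (s * (s * (Rabs C * s))) by ring.
      assert (0 <= Rabs C * s) by nra.
      assert (s * (Rabs C * s) <= Rabs C * s) by nra. nra. }
    assert (C * s ^ 3 <= Rabs C * s ^ 3) by (apply Rmult_le_compat_r; [apply pow_le|]; lra).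
    lra. }
  exists (al * s1 / 2). split; [nra|].
  intros s Hs. destruct (Rle_lt_dec s s1) as [Hl|Hl].
  - specialize (Hsmall s ltac:(lra)).
    assert (0 <= al * s * (1 - s1)) by (apply Rmult_le_pos; nra). nra.
  - specialize (Hsmall s1 ltac:(lra)).
    assert (w s1 <= w s) by (apply w_nondecr; lra).
    assert (0 <= al * s1 * (1 - s)) by (apply Rmult_le_pos; nra). nra.
Qed.

Lemma w_ge_1_minus_inv_sq : exists M, 2 <= M /\ forall r, M < r -> 1 - / r ^ 2 <= w r.
Proof.
  destruct Hw as (_&_&_&_&_&_&_&_&[C [M HC]]&_).
  exists (Rmax 2 (Rmax M (2 * Rabs C + 1))). split; [apply Rmax_l|].
  intros r Hr. apply Rmax_Rlt in Hr as [H2 Hr]. apply Rmax_Rlt in Hr as [HM HCr].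
  specialize (HC r HM).
  assert (Hr2 : 0 < r ^ 2) by (apply pow_lt; lra).
  rewrite Rabs_pos_eq with (x := / r ^ 4) in HC by (left; apply Rinv_0_lt_compat, pow_lt; lra).
  apply Rabs_le_between in HC as [HC _].
  replace (/ (2 * r ^ 2)) with (/ 2 * / r ^ 2) in HC by (field; lra).
  replace (/ r ^ 4) with (/ r ^ 2 * / r ^ 2) in HC by (field; lra).
  assert (Hq : 0 < / r ^ 2) by (apply Rinv_0_lt_compat; lra).
  assert (HCq : Rabs C * / r ^ 2 <= / 2).
  { apply Rmult_le_reg_r with (r ^ 2); [lra|].
    rewrite Rmult_assoc, Rinv_l, Rmult_1_r by lra. simpl. nra. }
  pose proof (Rle_abs C). pose proof (Rabs_pos C).
  assert (C * (/ r ^ 2 * / r ^ 2) <= / 2 * / r ^ 2) by nra.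
  lra.
Qed.

(* [picard] integrates [(r w^2 z')' = 2 r w^4 z] twice from [0]; [slope] is extended by
   [0] to [r <= 0] so that [picard f] is continuous on all of [R]. *)
Definition flux_density (f : R -> R) (s : R) : R := 2 * s * w s ^ 4 * f s.

Definition flux (f : R -> R) (t : R) : R := RInt (flux_density f) 0 t.

Definition slope (f : R -> R) (t : R) : R :=
  if Rle_dec t 0 then 0 else flux f t / (t * w t ^ 2).

Definition picard (f : R -> R) (r : R) : R := RInt (slope f) 0 (Rmax 0 r).

Section PicardStep.

Variables (f : R -> R) (C : R) (k : nat).
Hypothesis f_cont : forall x, continuity_pt f x.
Hypothesis f_bound : forall s, 0 <= s -> 0 <= f s <= C * s ^ k.

Let C_nonneg : 0 <= C.
Proof. pose proof (f_bound 1 ltac:(lra)) as H. rewrite pow1 in H. lra. Qed.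

Let INR_SSk_ge2 : 2 <= INR (S (S k)).
Proof. replace 2 with (INR 2) by (simpl; ring). apply le_INR. lia. Qed.

Lemma continuity_pt_flux_density s : 0 <= s -> continuity_pt (flux_density f) s.
Proof.
  intros Hs. unfold flux_density.
  apply continuity_pt_mult; [|apply f_cont].
  apply continuity_pt_mult; [|apply continuity_pt_pow_fun, w_continuity_pt, Hs].
  apply continuity_pt_mult; [apply continuity_pt_const; intros ??; reflexivity|apply continuity_pt_id].
Qed.

Lemma ex_RInt_flux_density t : 0 <= t -> ex_RInt (flux_density f) 0 t.
Proof.
  intros Ht. apply (ex_RInt_continuous (V:=R_CompleteNormedModule)).
  intros z Hz. rewrite Rmin_left, Rmax_right in Hz by lra.
  apply continuity_pt_filterlim, continuity_pt_flux_density. lra.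
Qed.

Lemma flux_derive t : 0 < t -> is_derive (flux f) t (flux_density f t).
Proof.
  intros Ht.
  apply (is_derive_RInt (V:=R_CompleteNormedModule) (flux_density f) _ 0).
  - apply (locally_interval _ t 0 p_infty); simpl; auto.
    intros y Hy _. apply (RInt_correct (V:=R_CompleteNormedModule)), ex_RInt_flux_density. lra.
  - apply continuity_pt_filterlim, continuity_pt_flux_density. lra.
Qed.

Lemma flux_bound t : 0 <= t ->
  0 <= flux f t <= 2 * C * w t ^ 4 * t ^ S (S k) / INR (S (S k)).
Proof.
  intros Ht. pose proof (ex_RInt_flux_density t Ht) as Hex. split.
  - apply RInt_ge_0; auto. intros x Hx. unfold flux_density.
    pose proof (w_bounds x ltac:(lra)). pose proof (f_bound x ltac:(lra)).
    assert (0 <= w x ^ 4) by (apply pow_le; lra).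
    apply Rmult_le_pos; [apply Rmult_le_pos|]; lra.
  - apply (is_RInt_le (flux_density f) (fun s => (2 * C * w t ^ 4) * s ^ S k) 0 t); auto.
    + apply (RInt_correct (V:=R_CompleteNormedModule)), Hex.
    + apply is_RInt_scal_pow.
    + intros x Hx. unfold flux_density.
      pose proof (w_bounds x ltac:(lra)). pose proof (f_bound x ltac:(lra)).
      assert (w x ^ 4 <= w t ^ 4) by (apply pow_incr; split; [lra|apply w_nondecr; lra]).
      assert (0 <= w x ^ 4) by (apply pow_le; lra).
      assert (0 <= x ^ k) by (apply pow_le; lra).
      change (x ^ S k) with (x * x ^ k).
      assert (f x * w x ^ 4 <= C * x ^ k * w t ^ 4) by (apply Rmult_le_compat; lra).
      nra.
Qed.

Lemma slope_pos_eq t : 0 < t -> slope f t = flux f t / (t * w t ^ 2).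
Proof. intros Ht. unfold slope. destruct (Rle_dec t 0); [lra|reflexivity]. Qed.

Lemma slope_bound t : 0 < t -> 0 <= slope f t <= 2 * C * t ^ S k / INR (S (S k)).
Proof.
  intros Ht. rewrite slope_pos_eq by exact Ht.
  pose proof (flux_bound t ltac:(lra)) as HP.
  pose proof (w_pos_lt1 t Ht) as Hwt.
  assert (Hw2 : 0 < w t ^ 2 <= 1) by (split; [apply pow_lt|apply pow_le_one]; lra).
  assert (Hd : 0 < t * w t ^ 2) by (apply Rmult_lt_0_compat; lra).
  pose proof C_nonneg. pose proof INR_SSk_ge2.
  split; [apply Rdiv_le_0_compat; lra|].
  apply Rmult_le_reg_r with (t * w t ^ 2); [exact Hd|].
  unfold Rdiv at 1. rewrite Rmult_assoc, Rinv_l, Rmult_1_r by lra.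
  eapply Rle_trans; [apply HP|].
  assert (0 <= 2 * C * t ^ S k / INR (S (S k))).
  { apply Rdiv_le_0_compat; [apply Rmult_le_pos; [lra|apply pow_le; lra]|lra]. }
  replace (2 * C * w t ^ 4 * t ^ S (S k) / INR (S (S k)))
    with (2 * C * t ^ S k / INR (S (S k)) * (t * w t ^ 2) * w t ^ 2)
    by (change (t ^ S (S k)) with (t * t ^ S k); field; lra).
  assert (0 <= 2 * C * t ^ S k / INR (S (S k)) * (t * w t ^ 2)) by (apply Rmult_le_pos; lra).
  nra.
Qed.

Lemma slope_continuity x : continuity_pt (slope f) x.
Proof.
  apply (continuity_pt_of_vanishing_nonpos _ C).
  - intros t Ht. unfold slope. destruct (Rle_dec t 0); [reflexivity|lra].
  - intros t Ht.
    apply (continuity_pt_locally_ext (fun y => flux f y / (y * w y ^ 2)) _ t); [lra| |].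
    + intros y Hy. unfold Rdist in Hy. apply Rabs_def2 in Hy.
      rewrite slope_pos_eq; [reflexivity|lra].
    + pose proof (w_pos_lt1 t Ht). assert (0 < w t ^ 2) by (apply pow_lt; lra).
      apply continuity_pt_div.
      * apply derivable_continuous_pt. exists (flux_density f t).
        apply is_derive_Reals, flux_derive, Ht.
      * apply continuity_pt_mult; [apply continuity_pt_id|].
        apply continuity_pt_pow_fun, w_continuity_pt. lra.
      * nra.
  - intros t Ht. destruct (slope_bound t ltac:(lra)) as [H0 H1].
    rewrite Rabs_pos_eq by exact H0. eapply Rle_trans; [exact H1|].
    assert (t ^ S k <= t) by (change (t ^ S k) with (t * t ^ k);
      pose proof (pow_le_one t k ltac:(lra)); pose proof (pow_le t k ltac:(lra)); nra).
    pose proof C_nonneg. pose proof INR_SSk_ge2.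
    apply Rmult_le_reg_r with (INR (S (S k))); [lra|].
    unfold Rdiv. rewrite Rmult_assoc, Rinv_l, Rmult_1_r by lra.
    assert (C * t ^ S k <= C * t) by (apply Rmult_le_compat_l; lra).
    assert (0 <= C * t) by nra. nra.
Qed.

Lemma ex_RInt_slope a b : ex_RInt (slope f) a b.
Proof.
  apply (ex_RInt_continuous (V:=R_CompleteNormedModule)).
  intros z _. apply continuity_pt_filterlim, slope_continuity.
Qed.

Lemma picard_derive x : 0 < x -> is_derive (picard f) x (slope f x).
Proof.
  intros Hx.
  apply (is_derive_ext_loc (fun r => RInt (slope f) 0 r)).
  - apply (locally_interval _ x 0 p_infty); simpl; auto.
    intros y Hy _. unfold picard. rewrite Rmax_right; [reflexivity|lra].
  - apply (is_derive_RInt (V:=R_CompleteNormedModule) (slope f) _ 0).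
    + apply filter_forall. intros y. apply (RInt_correct (V:=R_CompleteNormedModule)), ex_RInt_slope.
    + apply continuity_pt_filterlim, slope_continuity.
Qed.

Lemma picard_nonpos r : r <= 0 -> picard f r = 0.
Proof.
  intros Hr. unfold picard. rewrite Rmax_left by lra.
  apply (RInt_point (V:=R_CompleteNormedModule)).
Qed.

Lemma picard_bound r : 0 <= r ->
  0 <= picard f r <= 2 * C * r ^ S (S k) / (INR (S (S k)) * INR (S (S k))).
Proof.
  intros Hr. unfold picard. rewrite Rmax_right by exact Hr. split.
  - apply RInt_ge_0; [exact Hr|apply ex_RInt_slope|].
    intros x Hx. apply slope_bound. lra.
  - apply (is_RInt_le (slope f) (fun s => (2 * C / INR (S (S k))) * s ^ S k) 0 r); [exact Hr| | |].
    + apply (RInt_correct (V:=R_CompleteNormedModule)), ex_RInt_slope.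
    + replace (2 * C * r ^ S (S k) / (INR (S (S k)) * INR (S (S k))))
        with (2 * C / INR (S (S k)) * r ^ S (S k) / INR (S (S k))) by (field; lra).
      apply is_RInt_scal_pow.
    + intros x Hx. destruct (slope_bound x ltac:(lra)) as [_ H]. unfold Rdiv in *. lra.
Qed.

Lemma picard_continuity x : continuity_pt (picard f) x.
Proof.
  apply (continuity_pt_of_vanishing_nonpos _ C); [exact picard_nonpos| |].
  - intros t Ht. apply derivable_continuous_pt. exists (slope f t).
    apply is_derive_Reals, picard_derive, Ht.
  - intros t Ht. destruct (picard_bound t ltac:(lra)) as [H0 H1].
    rewrite Rabs_pos_eq by exact H0. eapply Rle_trans; [exact H1|].
    assert (t ^ S (S k) <= t).
    { change (t ^ S (S k)) with (t * t ^ S k).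
      pose proof (pow_le_one t (S k) ltac:(lra)). pose proof (pow_le t (S k) ltac:(lra)). nra. }
    pose proof C_nonneg. pose proof INR_SSk_ge2.
    assert (4 <= INR (S (S k)) * INR (S (S k))) by nra.
    apply Rmult_le_reg_r with (INR (S (S k)) * INR (S (S k))); [lra|].
    unfold Rdiv. rewrite Rmult_assoc, Rinv_l, Rmult_1_r by lra.
    assert (C * t ^ S (S k) <= C * t) by (apply Rmult_le_compat_l; lra).
    assert (0 <= C * t) by nra. nra.
Qed.

End PicardStep.

Fixpoint picard_term (n : nat) : R -> R :=
  match n with O => fun _ => 1 | S m => picard (picard_term m) end.

Lemma picard_term_spec n :
  (forall x, continuity_pt (picard_term n) x) /\
  (forall s, 0 <= s -> 0 <= picard_term n s <= / INR (fact n) * s ^ (2 * n)).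
Proof.
  induction n as [|n [IHc IHb]].
  - split; [intros x; apply continuity_pt_const; intros ??; reflexivity|].
    intros s _. simpl. lra.
  - split; [apply (picard_continuity _ _ _ IHc IHb)|].
    intros s Hs. simpl picard_term.
    destruct (picard_bound _ _ _ IHc IHb s Hs) as [H0 H1].
    split; [exact H0|]. eapply Rle_trans; [exact H1|].
    replace (2 * S n)%nat with (S (S (2 * n))) by lia.
    rewrite fact_simpl, mult_INR.
    assert (Hf : 0 < INR (fact n)) by apply INR_fact_lt_0.
    assert (HN : INR (S (S (2 * n))) = 2 * (INR n + 1))
      by (rewrite !S_INR, mult_INR; simpl; ring).
    rewrite HN, S_INR.
    pose proof (pos_INR n).
    assert (0 <= s ^ S (S (2 * n))) by (apply pow_le; lra).
    apply Rmult_le_compat_r with (r := s ^ S (S (2 * n))) in H1; [|lra].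
    unfold Rdiv. rewrite !Rmult_assoc, (Rmult_comm (s ^ _)), <- !Rmult_assoc.
    apply Rmult_le_compat_r; [lra|].
    apply Rmult_le_reg_r with (INR (fact n) * (INR n + 1) * (INR n + 1)); [nra|].
    field_simplify; nra.
Qed.

Lemma picard_term_continuity n x : continuity_pt (picard_term n) x.
Proof. apply picard_term_spec. Qed.

Lemma picard_term_bound n s : 0 <= s -> 0 <= picard_term n s <= / INR (fact n) * (s ^ 2) ^ n.
Proof. rewrite <- pow_mult. apply picard_term_spec. Qed.

Lemma flux_picard_term_bound n t : 0 <= t ->
  0 <= flux (picard_term n) t <= t ^ 2 * (/ INR (fact n) * (t ^ 2) ^ n).
Proof.
  intros Ht.
  destruct (flux_bound _ _ _ (picard_term_continuity n) (proj2 (picard_term_spec n)) t Ht)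
    as [H0 H1].
  split; [exact H0|]. eapply Rle_trans; [exact H1|].
  pose proof (w_bounds t Ht).
  assert (w t ^ 4 <= 1) by (apply pow_le_one; lra).
  assert (0 <= w t ^ 4) by (apply pow_le; lra).
  assert (HN : 2 <= INR (S (S (2 * n)))) by (replace 2 with (INR 2) by (simpl; ring); apply le_INR; lia).
  assert (Hf : 0 < / INR (fact n)) by (apply Rinv_0_lt_compat, INR_fact_lt_0).
  replace (t ^ 2 * (/ INR (fact n) * (t ^ 2) ^ n)) with (/ INR (fact n) * t ^ S (S (2 * n)))
    by (rewrite <- pow_mult; replace (S (S (2 * n))) with (2 + 2 * n)%nat by lia; rewrite pow_add; ring).
  assert (0 <= t ^ S (S (2 * n))) by (apply pow_le; lra).
  set (P := t ^ S (S (2 * n))) in *. set (F := / INR (fact n)) in *.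
  apply Rmult_le_reg_r with (INR (S (S (2 * n)))); [lra|]. unfold Rdiv.
  rewrite Rmult_assoc, Rinv_l, Rmult_1_r by lra.
  assert (F * w t ^ 4 * P <= F * P) by (rewrite Rmult_assoc; apply Rmult_le_compat_l; nra).
  assert (0 <= F * P) by (apply Rmult_le_pos; lra).
  nra.
Qed.

Definition z1 (r : R) : R := Series (fun n => picard_term n r).

Definition z1_flux (r : R) : R := Series (fun n => flux (picard_term n) r).

Section NearPoint.

Variables (x0 : R) (r : posreal).
Hypothesis x0_pos : 0 < x0.
Hypothesis r_le : r <= x0 / 2.

Let M := (2 * x0) ^ 2.

Let ball_bounds y : Boule x0 r y -> 0 <= y /\ y ^ 2 <= M.
Proof.
  intros Hy. apply Boule_half_bounds in Hy; [|exact r_le].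
  split; [lra|]. apply pow_incr. lra.
Qed.

Lemma CVU_z1 : CVU (fun N y => sum_f_R0 (fun n => picard_term n y) N) z1 x0 r.
Proof.
  apply (CVU_series_dominated _ _ (exp M) _ _ (is_series_exp M)).
  intros n y Hy. destruct (ball_bounds y Hy) as [Hy0 HyM].
  destruct (picard_term_bound n y Hy0) as [H0 H1].
  rewrite Rabs_pos_eq by exact H0. eapply Rle_trans; [exact H1|].
  apply Rmult_le_compat_l; [left; apply Rinv_0_lt_compat, INR_fact_lt_0|].
  apply pow_incr. split; [apply pow_le|]; lra.
Qed.

Lemma CVU_z1_flux :
  CVU (fun N y => sum_f_R0 (fun n => flux (picard_term n) y) N) z1_flux x0 r.
Proof.
  apply (CVU_series_dominated _ (fun n => M * (/ INR (fact n) * M ^ n)) (M * exp M)).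
  - apply (is_series_scal_l (K:=R_AbsRing) (V:=R_NormedModule)), is_series_exp.
  - intros n y Hy. destruct (ball_bounds y Hy) as [Hy0 HyM].
    destruct (flux_picard_term_bound n y Hy0) as [H0 H1].
    rewrite Rabs_pos_eq by exact H0. eapply Rle_trans; [exact H1|].
    assert (Hf : 0 < / INR (fact n)) by apply Rinv_0_lt_compat, INR_fact_lt_0.
    assert (0 <= y ^ 2) by (apply pow_le; lra).
    assert ((y ^ 2) ^ n <= M ^ n) by (apply pow_incr; lra).
    assert (0 <= (y ^ 2) ^ n) by (apply pow_le; lra).
    apply Rmult_le_compat; [lra|apply Rmult_le_pos; lra|lra|apply Rmult_le_compat_l; lra].
Qed.

Lemma z1_continuity_near y : Boule x0 r y -> continuity_pt z1 y.
Proof.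
  apply (CVU_continuity _ z1 x0 r CVU_z1).
  intros n y' _. apply continuity_pt_sum_f_R0. intros m. apply picard_term_continuity.
Qed.

Lemma z1_flux_continuity_near y : Boule x0 r y -> continuity_pt z1_flux y.
Proof.
  apply (CVU_continuity _ z1_flux x0 r CVU_z1_flux).
  intros n y' Hy'. apply continuity_pt_sum_f_R0. intros m.
  apply derivable_continuous_pt. eexists. apply is_derive_Reals.
  apply (flux_derive _ (picard_term_continuity m)).
  apply Boule_half_bounds in Hy'; lra.
Qed.

Lemma z1_flux_derive_at : derivable_pt_lim z1_flux x0 (flux_density z1 x0).
Proof.
  apply (derivable_pt_lim_CVU
           (fun N y => sum_f_R0 (fun n => flux (picard_term n) y) N)
           (fun N y => 2 * y * w y ^ 4 * sum_f_R0 (fun n => picard_term n y) N)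
           z1_flux (fun y => 2 * y * w y ^ 4 * z1 y) x0 x0 r (Boule_center x0 r)).
  - intros y n Hy. destruct (ball_bounds y Hy) as [Hy0 _].
    apply is_derive_Reals.
    rewrite scal_sum.
    apply is_derive_sum_f_R0. intros m. rewrite Rmult_comm.
    apply (flux_derive _ (picard_term_continuity m)).
    apply Boule_half_bounds in Hy; lra.
  - apply (CVU_cv _ _ _ _ CVU_z1_flux).
  - apply (CVU_mult_bounded _ _ _ (2 * (2 * x0)) _ _ CVU_z1).
    intros y Hy. destruct (ball_bounds y Hy) as [Hy0 _].
    apply Boule_half_bounds in Hy; [|exact r_le].
    pose proof (w_bounds y Hy0).
    assert (0 <= w y ^ 4 <= 1) by (split; [apply pow_le|apply pow_le_one]; lra).
    rewrite Rabs_pos_eq by (apply Rmult_le_pos; lra). nra.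
  - intros y Hy. apply continuity_pt_mult; [|apply z1_continuity_near, Hy].
    destruct (ball_bounds y Hy) as [Hy0 _].
    apply continuity_pt_mult; [|apply continuity_pt_pow_fun, w_continuity_pt, Hy0].
    apply continuity_pt_mult; [apply continuity_pt_const; intros ??; reflexivity|apply continuity_pt_id].
Qed.

Lemma z1_derive_at : derivable_pt_lim z1 x0 (/ (x0 * w x0 ^ 2) * z1_flux x0).
Proof.
  assert (Hm : 0 < x0 / 2 * w (x0 / 2) ^ 2).
  { pose proof (w_pos_lt1 (x0 / 2) ltac:(lra)). apply Rmult_lt_0_compat; [lra|apply pow_lt; lra]. }
  apply (derivable_pt_lim_CVU
           (fun N y => sum_f_R0 (fun n => picard_term n y) (S N))
           (fun N y => / (y * w y ^ 2) * sum_f_R0 (fun n => flux (picard_term n) y) N)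
           z1 (fun y => / (y * w y ^ 2) * z1_flux y) x0 x0 r (Boule_center x0 r)).
  - intros y n Hy. apply Boule_half_bounds in Hy; [|exact r_le].
    apply is_derive_Reals.
    apply (is_derive_ext (fun x => 1 + sum_f_R0 (fun k => picard_term (S k) x) n)).
    { intros t. rewrite (decomp_sum (fun k => picard_term k t) (S n)) by lia. reflexivity. }
    rewrite scal_sum, <- (Rplus_0_l (sum_f_R0 _ n)).
    apply is_derive_Reals, derivable_pt_lim_plus; [apply derivable_pt_lim_const|].
    apply is_derive_Reals, is_derive_sum_f_R0. intros k.
    change (flux (picard_term k) y * / (y * w y ^ 2)) with (flux (picard_term k) y / (y * w y ^ 2)).
    rewrite <- (slope_pos_eq _ y) by lra.
    apply (picard_derive _ _ _ (picard_term_continuity k) (proj2 (picard_term_spec k))). lra.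
  - apply (CVU_cv _ _ _ _ (CVU_shift _ _ _ _ CVU_z1)).
  - apply (CVU_mult_bounded _ _ _ (/ (x0 / 2 * w (x0 / 2) ^ 2)) _ _ CVU_z1_flux).
    intros y Hy. apply Boule_half_bounds in Hy; [|exact r_le].
    assert (w (x0 / 2) <= w y) by (apply w_nondecr; lra).
    pose proof (w_pos_lt1 (x0 / 2) ltac:(lra)).
    assert (w (x0 / 2) ^ 2 <= w y ^ 2) by (apply pow_incr; lra).
    assert (x0 / 2 * w (x0 / 2) ^ 2 <= y * w y ^ 2) by (apply Rmult_le_compat; try lra; apply pow_le; lra).
    rewrite Rabs_pos_eq by (left; apply Rinv_0_lt_compat; lra).
    apply Rinv_le_contravar; lra.
  - intros y Hy. apply continuity_pt_mult; [|apply z1_flux_continuity_near, Hy].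
    apply Boule_half_bounds in Hy; [|exact r_le].
    pose proof (w_pos_lt1 y ltac:(lra)). assert (0 < w y ^ 2) by (apply pow_lt; lra).
    apply continuity_pt_inv; [|nra].
    apply continuity_pt_mult; [apply continuity_pt_id|].
    apply continuity_pt_pow_fun, w_continuity_pt. lra.
Qed.

End NearPoint.

Lemma z1_flux_derive x : 0 < x -> is_derive z1_flux x (flux_density z1 x).
Proof.
  intros Hx. assert (Hr : 0 < x / 2) by lra.
  apply is_derive_Reals, (z1_flux_derive_at x (mkposreal _ Hr)); simpl; lra.
Qed.

Lemma z1_derive x : 0 < x -> is_derive z1 x (z1_flux x / (x * w x ^ 2)).
Proof.
  intros Hx. assert (Hr : 0 < x / 2) by lra.
  apply is_derive_Reals. unfold Rdiv. rewrite Rmult_comm.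
  apply (z1_derive_at x (mkposreal _ Hr)); simpl; lra.
Qed.

Lemma ex_series_picard_term x : 0 <= x -> ex_series (fun n => picard_term n x).
Proof.
  intros Hx.
  apply (ex_series_le (V:=R_CompleteNormedModule) _ (fun n => / INR (fact n) * (x ^ 2) ^ n)).
  - intros n. destruct (picard_term_bound n x Hx). apply Rabs_pos_eq in H. 
    change (norm (picard_term n x)) with (Rabs (picard_term n x)). lra.
  - eexists. apply is_series_exp.
Qed.

Lemma z1_ge_1 x : 0 <= x -> 1 <= z1 x.
Proof.
  intros Hx. unfold z1. rewrite Series_incr_1 by (apply ex_series_picard_term, Hx).
  change (picard_term 0 x) with 1.
  enough (0 <= Series (fun k => picard_term (S k) x)) by lra.
  apply Series_nonneg.
  - intros n. apply picard_term_bound, Hx.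
  - apply (ex_series_incr_1 (K:=R_AbsRing) (V:=R_NormedModule) (fun n => picard_term n x)).
    apply ex_series_picard_term, Hx.
Qed.

Lemma z1_bounds_near_0xp x : 0 <= x -> z1 x <= exp (x ^ 2).
Proof.
  intros Hx. unfold z1. rewrite <- (is_series_unique _ _ (is_series_exp (x ^ 2))).
  apply Series_le; [intros n; apply picard_term_bound, Hx|].
  eexists. apply is_series_exp.
Qed.

Lemma z1_flux_nonneg x : 0 <= x -> 0 <= z1_flux x.
Proof.
  intros Hx. apply Series_nonneg; [intros n; apply flux_picard_term_bound, Hx|].
  apply (ex_series_le (V:=R_CompleteNormedModule) _ (fun n => x ^ 2 * (/ INR (fact n) * (x ^ 2) ^ n))).
  - intros n. destruct (flux_picard_term_bound n x Hx).
    change (norm (flux (picard_term n) x)) with (Rabs (flux (picard_term n) x)).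
    rewrite Rabs_pos_eq; lra.
  - eexists. apply (is_series_scal_l (K:=R_AbsRing) (V:=R_NormedModule)), is_series_exp.
Qed.

Lemma z1_Derive x : 0 < x -> Derive z1 x = z1_flux x / (x * w x ^ 2).
Proof. intros Hx. apply is_derive_unique, z1_derive, Hx. Qed.

Lemma z1_Derive_nonneg x : 0 < x -> 0 <= Derive z1 x.
Proof.
  intros Hx. rewrite z1_Derive by exact Hx.
  pose proof (z1_flux_nonneg x ltac:(lra)). pose proof (w_pos_lt1 x Hx).
  apply Rdiv_le_0_compat; [lra|]. apply Rmult_lt_0_compat; [lra|apply pow_lt; lra].
Qed.

Lemma z1_derive2 x : 0 < x ->
  is_derive (Derive z1) x
    ((flux_density z1 x * (x * w x ^ 2) - z1_flux x * (w x ^ 2 + x * (2 * w x * Derive w x)))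
      / (x * w x ^ 2) ^ 2).
Proof.
  intros Hx. pose proof (w_pos_lt1 x Hx).
  apply (is_derive_ext_loc (fun y => z1_flux y / (y * w y ^ 2))).
  { apply (locally_interval _ x 0 p_infty); simpl; auto.
    intros y Hy _. rewrite z1_Derive; auto. }
  pose proof (z1_flux_derive x Hx) as Hp. pose proof (w_ex_derive x Hx).
  auto_derive.
  - repeat split; [eexists; exact Hp|assumption|].
    intros Habs. assert (0 < w x * (w x * 1)) by nra. nra.
  - change (fun y => z1_flux y) with z1_flux. change (fun y => w y) with w.
    rewrite (is_derive_unique _ _ _ Hp). field. lra.
Qed.

Lemma z1_solves : solves_z_ode w z1.
Proof.
  split.
  - intros r Hr. split; eexists; [apply z1_derive|apply z1_derive2]; exact Hr.
  - intros r Hr. pose proof (w_pos_lt1 r Hr).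
    rewrite (is_derive_unique _ _ _ (z1_derive2 r Hr)), z1_Derive by exact Hr.
    unfold flux_density. field. lra.
Qed.

(* For a solution [z], [Y = sqrt r * w * z] solves [Y'' = riccati_potential * Y] and its
   logarithmic derivative [rho] the Riccati equation [rho' = riccati_potential - rho^2];
   since [riccati_potential -> 2], [Y] grows like [exp (sqrt 2 * r)] when [z > 0] and [z' >= 0]. *)
Definition Y (z : R -> R) (r : R) : R := sqrt r * w r * z r.

Definition rho (z : R -> R) (r : R) : R := / (2 * r) + Derive w r / w r + Derive z r / z r.

Definition riccati_potential (r : R) : R := 3 * w r ^ 2 - 1 + 3 / (4 * r ^ 2).

Lemma riccati_potential_ge : exists M, 2 <= M /\ forall r, M < r -> 2 - 6 / r ^ 2 <= riccati_potential r.
Proof.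
  destruct w_ge_1_minus_inv_sq as [M [HM H]].
  exists M. split; [exact HM|]. intros r Hr. specialize (H r Hr).
  assert (Hr2 : 4 <= r ^ 2) by (simpl; nra).
  assert (0 < / r ^ 2 <= / 4) by (split; [apply Rinv_0_lt_compat|apply Rinv_le_contravar]; lra).
  assert (1 - 2 * / r ^ 2 <= w r ^ 2) by nra.
  unfold riccati_potential, Rdiv. rewrite Rinv_mult. lra.
Qed.

Section Riccati.

Variable z : R -> R.
Hypothesis z_solves : solves_z_ode w z.
Hypothesis z_pos : forall r, 0 < r -> 0 < z r.
Hypothesis z_Derive_nonneg : forall r, 0 < r -> 0 <= Derive z r.

Lemma Y_pos r : 0 < r -> 0 < Y z r.
Proof.
  intros Hr. pose proof (w_pos_lt1 r Hr). pose proof (z_pos r Hr). pose proof (sqrt_lt_R0 r Hr).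
  unfold Y. apply Rmult_lt_0_compat; [apply Rmult_lt_0_compat|]; lra.
Qed.

Lemma rho_pos r : 0 < r -> 0 < rho z r.
Proof.
  intros Hr. unfold rho.
  pose proof (w_pos_lt1 r Hr). pose proof (z_pos r Hr). pose proof (w_deriv_pos r Hr).
  pose proof (z_Derive_nonneg r Hr).
  assert (0 < / (2 * r)) by (apply Rinv_0_lt_compat; lra).
  assert (0 < Derive w r / w r) by (apply Rdiv_lt_0_compat; lra).
  assert (0 <= Derive z r / z r) by (apply Rdiv_le_0_compat; lra).
  lra.
Qed.

Lemma Y_derive r : 0 < r -> is_derive (Y z) r (rho z r * Y z r).
Proof.
  intros Hr. pose proof (w_pos_lt1 r Hr). pose proof (z_pos r Hr).
  pose proof (w_ex_derive r Hr). pose proof (proj1 (proj1 z_solves r Hr)).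
  unfold Y. auto_derive; [repeat split; auto|].
  unfold rho. pose proof (sqrt_lt_R0 r Hr). pose proof (sqrt_sqrt r ltac:(lra)).
  change (fun x => w x) with w. change (fun x => z x) with z.
  replace (2 * r) with (2 * (sqrt r * sqrt r)) by lra.
  field. lra.
Qed.

Lemma rho_derive r : 0 < r -> is_derive (rho z) r (riccati_potential r - rho z r ^ 2).
Proof.
  intros Hr. pose proof (w_pos_lt1 r Hr). pose proof (z_pos r Hr).
  destruct z_solves as [Hz2 Hzo]. destruct (Hz2 r Hr).
  pose proof (w_ex_derive r Hr). pose proof (w_ex_derive2 r Hr).
  destruct Hw as (_ & Hwo & _). specialize (Hwo r Hr). specialize (Hzo r Hr).
  unfold rho. auto_derive; [repeat split; auto; lra|].
  change (fun x => w x) with w. change (fun x => z x) with z.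
  change (fun x => Derive w x) with (Derive w). change (fun x => Derive z x) with (Derive z).
  replace (Derive (Derive w) r) with (- (/ r * Derive w r - / r ^ 2 * w r + (1 - w r ^ 2) * w r)) by lra.
  replace (Derive (Derive z) r) with (- ((2 * Derive w r / w r + / r) * Derive z r) + 2 * w r ^ 2 * z r) by lra.
  unfold riccati_potential. field. lra.
Qed.

Lemma rho_le_sqrt2 :
  exists B, 0 <= B /\ forall r, 1 <= r -> rho z r <= sqrt 2 + / r ^ 2 + B * exp (- (2 * sqrt 2 * r)).
Proof.
  pose proof sqrt2_bounds as Hs2. set (s := sqrt 2) in *.
  assert (Hss : s * s = 2) by (apply sqrt_sqrt; lra).
  set (G := fun r => exp (2 * s * r) * (rho z r - s - / r ^ 2)).
  assert (HG : forall r, 1 <= r -> G r <= G 1).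
  { intros r Hr.
    apply (nonincr_of_is_derive G (fun r => exp (2 * s * r) * (2 * s * (rho z r - s - / r ^ 2)
               + (riccati_potential r - rho z r ^ 2) + 2 / r ^ 3)) 1 r Hr).
    - intros x Hx. unfold G.
      pose proof (rho_derive x ltac:(lra)) as Hrd.
      auto_derive; [repeat split; [eexists; eauto|intro; nra]|].
      change (fun y => rho z y) with (rho z).
      rewrite (is_derive_unique _ _ _ Hrd). field. lra.
    - intros x Hx. pose proof (exp_pos (2 * s * x)).
      enough (2 * s * (rho z x - s - / x ^ 2) + (riccati_potential x - rho z x ^ 2) + 2 / x ^ 3 <= 0) by nra.
      pose proof (w_pos_lt1 x ltac:(lra)).
      unfold riccati_potential. set (q := / x). set (e := rho z x - s).
      replace (rho z x) with (s + e) by (unfold e; ring).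
      assert (Hq : 0 < q <= 1).
      { unfold q. split; [apply Rinv_0_lt_compat; lra|].
        rewrite <- Rinv_1. apply Rinv_le_contravar; lra. }
      replace (/ x ^ 2) with (q ^ 2) by (unfold q; field; lra).
      replace (3 / (4 * x ^ 2)) with (3 / 4 * q ^ 2) by (unfold q; field; lra).
      replace (2 / x ^ 3) with (2 * q ^ 3) by (unfold q; field; lra).
      assert (w x ^ 2 < 1) by (simpl; nra).
      assert (q ^ 2 * (- 2 * s + 3 / 4 + 2 * q) <= 0) by (assert (0 < q ^ 2) by nra; nra).
      nra. }
  exists (Rmax 0 (G 1)). split; [apply Rmax_l|].
  intros r Hr. pose proof (Rmax_r 0 (G 1)).
  assert (HG' : exp (2 * s * r) * (rho z r - s - / r ^ 2) <= G 1) by exact (HG r Hr).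
  clear HG. rename HG' into HG.
  assert (He : exp (- (2 * s * r)) * exp (2 * s * r) = 1) by (rewrite <- exp_plus, Rplus_opp_l; apply exp_0).
  pose proof (exp_pos (- (2 * s * r))).
  apply Rmult_le_compat_l with (r := exp (- (2 * s * r))) in HG; [|lra].
  rewrite <- Rmult_assoc, He, Rmult_1_l in HG.
  assert (exp (- (2 * s * r)) * G 1 <= Rmax 0 (G 1) * exp (- (2 * s * r))) by nra.
  lra.
Qed.

Lemma Y_le_exp : exists C, forall r, 1 <= r -> Y z r <= C * exp (sqrt 2 * r).
Proof.
  destruct rho_le_sqrt2 as [B [HB Hrho]].
  pose proof sqrt2_bounds as Hs2. set (s := sqrt 2) in *.
  set (phi := fun r => s * r - / r - B / (2 * s) * exp (- (2 * s * r))).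
  set (F := fun r => Y z r * exp (- phi r)).
  assert (HF : forall r, 1 <= r -> F r <= F 1).
  { intros r Hr.
    apply (nonincr_of_is_derive F (fun r => Y z r * exp (- phi r) *
             (rho z r - (s + / r ^ 2 + B * exp (- (2 * s * r))))) 1 r Hr).
    - intros x Hx. unfold F, phi.
      pose proof (Y_derive x ltac:(lra)) as HYd.
      auto_derive; [repeat split; [eexists; eauto|lra]|].
      change (fun y => Y z y) with (Y z).
      rewrite (is_derive_unique _ _ _ HYd).
      replace (s * x + - / x + - (B / (2 * s) * exp (- (2 * s * x))))
        with (s * x - / x - B / (2 * s) * exp (- (2 * s * x))) by ring.
      field. lra.
    - intros x Hx. specialize (Hrho x ltac:(lra)).
      pose proof (Y_pos x ltac:(lra)). pose proof (exp_pos (- phi x)).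
      assert (0 < Y z x * exp (- phi x)) by (apply Rmult_lt_0_compat; lra).
      nra. }
  exists (F 1). intros r Hr. specialize (HF r Hr). unfold F in HF.
  assert (Hp : phi r <= s * r).
  { unfold phi. assert (0 < / r) by (apply Rinv_0_lt_compat; lra).
    assert (0 <= B / (2 * s) * exp (- (2 * s * r))).
    { apply Rmult_le_pos; [apply Rdiv_le_0_compat; lra|left; apply exp_pos]. }
    lra. }
  assert (He : exp (- phi r) * exp (phi r) = 1) by (rewrite <- exp_plus, Rplus_opp_l; apply exp_0).
  assert (exp (phi r) <= exp (s * r)) by (apply exp_le_compat; exact Hp).
  pose proof (exp_pos (phi r)).
  assert (0 <= F 1) by (unfold F; pose proof (Y_pos 1 ltac:(lra)); pose proof (exp_pos (- phi 1)); nra).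
  apply Rmult_le_compat_r with (r := exp (phi r)) in HF; [|lra].
  rewrite Rmult_assoc, He, Rmult_1_r in HF.
  eapply Rle_trans; [exact HF|]. apply Rmult_le_compat_l; assumption.
Qed.

Section LowerBound.

Variable M0 : R.
Hypothesis M0_ge : 2 <= M0.
Hypothesis potential_ge : forall r, M0 < r -> 2 - 6 / r ^ 2 <= riccati_potential r.

Let s := sqrt 2.

(* If [rho] stayed below [sqrt 2 - 8 / r^2], the Riccati equation would force
   [sqrt 2 - rho = O(exp (- r / 2))], which decays faster than [8 / r^2]. *)
Lemma rho_ge_sqrt2_somewhere : exists r1, M0 + 4 <= r1 /\ s - 8 / r1 ^ 2 <= rho z r1.
Proof.
  pose proof sqrt2_bounds as Hs2. fold s in Hs2.
  assert (Hss : s * s = 2) by (apply sqrt_sqrt; lra).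
  set (r0 := M0 + 4).
  apply NNPP. intros Hn.
  assert (Hlt : forall r, r0 <= r -> rho z r < s - 8 / r ^ 2).
  { intros r Hr. apply Rnot_le_lt. intros Hle. apply Hn. exists r. auto. }
  set (J := fun r => (s - rho z r) * exp (r / 2)).
  assert (HJ : forall r, r0 <= r -> J r <= J r0).
  { intros r Hr.
    apply (nonincr_of_is_derive J (fun r => exp (r / 2) *
             (rho z r ^ 2 - riccati_potential r + (s - rho z r) / 2)) r0 r Hr).
    - intros x Hx. unfold J.
      pose proof (rho_derive x ltac:(unfold r0 in *; lra)) as Hrd.
      auto_derive; [repeat split; eexists; eauto|].
      change (fun y => rho z y) with (rho z).
      rewrite (is_derive_unique _ _ _ Hrd). unfold Rdiv. ring.
    - intros x Hx. assert (Hx0 : 0 < x) by (unfold r0 in *; lra).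
      specialize (Hlt x ltac:(lra)). specialize (potential_ge x ltac:(unfold r0 in *; lra)).
      pose proof (rho_pos x Hx0). pose proof (exp_pos (x / 2)).
      set (e := s - rho z x) in *.
      replace (rho z x) with (s - e) in * by (unfold e; ring).
      assert (0 < / x ^ 2) by (apply Rinv_0_lt_compat, pow_lt; lra).
      unfold Rdiv in *.
      assert (8 * / x ^ 2 < e) by lra.
      assert ((s - e) ^ 2 - riccati_potential x + e * / 2 <= 0)
        by (assert (e * e <= s * e) by nra; nra).
      nra. }
  destruct (inv_sq_mul_exp_unbounded (J r0) r0 ltac:(unfold r0; lra)) as [r [Hr HA]].
  specialize (HJ r Hr). specialize (Hlt r Hr). unfold J in HJ.
  assert (8 / r ^ 2 * exp (r / 2) <= J r0).
  { eapply Rle_trans; [|exact HJ]. apply Rmult_le_compat_r; [left; apply exp_pos|lra]. }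
  lra.
Qed.

(* [sqrt 2 - 8 / r^2] is a subsolution of the Riccati equation beyond [M0 + 4]. *)
Lemma rho_ge_sqrt2_from r1 : M0 + 4 <= r1 -> s - 8 / r1 ^ 2 <= rho z r1 ->
  forall r, r1 <= r -> s - 8 / r ^ 2 <= rho z r.
Proof.
  intros Hr1 Hhr1.
  pose proof sqrt2_bounds as Hs2. fold s in Hs2.
  assert (Hss : s * s = 2) by (apply sqrt_sqrt; lra).
  set (h := fun r => s - 8 / r ^ 2).
  set (E := fun r => exp (s * r + 8 / r)).
  set (K := fun r => Y z r * E r * (rho z r - h r)).
  assert (HK : forall r, r1 <= r -> K r1 <= K r).
  { intros r Hr.
    apply (nondecr_of_is_derive K (fun r => Y z r * E r * (riccati_potential r - h r ^ 2 - 16 / r ^ 3)) r1 r Hr).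
    - intros x Hx. unfold K, E, h.
      pose proof (rho_derive x ltac:(lra)) as Hrd. pose proof (Y_derive x ltac:(lra)) as HYd.
      auto_derive; [repeat split; try (eexists; eauto); intro; nra|].
      change (fun y => rho z y) with (rho z). change (fun y => Y z y) with (Y z).
      rewrite (is_derive_unique _ _ _ Hrd), (is_derive_unique _ _ _ HYd).
      unfold Rdiv. field. lra.
    - intros x Hx. specialize (potential_ge x ltac:(lra)).
      pose proof (Y_pos x ltac:(lra)). assert (0 < E x) by apply exp_pos.
      apply Rmult_le_pos; [apply Rmult_le_pos; lra|].
      unfold h. set (q := / x).
      assert (Hq : 0 < q <= / 4) by (unfold q; split; [apply Rinv_0_lt_compat|apply Rinv_le_contravar]; lra).
      replace (6 / x ^ 2) with (6 * q ^ 2) in potential_ge by (unfold q; field; lra).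
      replace (8 / x ^ 2) with (8 * q ^ 2) by (unfold q; field; lra).
      replace (16 / x ^ 3) with (16 * q ^ 3) by (unfold q; field; lra).
      assert (0 <= q ^ 2 * (16 * s - 6 - 64 * q ^ 2 - 16 * q)) by (apply Rmult_le_pos; [apply pow_le|]; nra).
      nra. }
  intros r Hr. specialize (HK r Hr). unfold K in HK.
  pose proof (Y_pos r ltac:(lra)). pose proof (Y_pos r1 ltac:(lra)).
  assert (0 < E r) by apply exp_pos. assert (0 < E r1) by apply exp_pos.
  assert (0 <= Y z r1 * E r1 * (rho z r1 - h r1)) by (apply Rmult_le_pos; [apply Rmult_le_pos|unfold h]; lra).
  assert (0 < Y z r * E r) by (apply Rmult_lt_0_compat; lra).
  unfold h in *. nra.
Qed.

End LowerBound.

Lemma Y_ge_exp : exists c M, 0 < c /\ 1 <= M /\ forall r, M <= r -> c * exp (sqrt 2 * r) <= Y z r.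
Proof.
  destruct riccati_potential_ge as [M0 [HM0 HU]].
  destruct (rho_ge_sqrt2_somewhere M0 HM0 HU) as [r1 [Hr1 Hrho1]].
  pose proof (rho_ge_sqrt2_from M0 HM0 HU r1 Hr1 Hrho1) as Hrho.
  pose proof sqrt2_bounds as Hs2. set (s := sqrt 2) in *.
  set (F := fun r => Y z r * exp (- (s * r + 8 / r))).
  assert (HF : forall r, r1 <= r -> F r1 <= F r).
  { intros r Hr.
    apply (nondecr_of_is_derive F (fun r => Y z r * exp (- (s * r + 8 / r)) * (rho z r - (s - 8 / r ^ 2))) r1 r Hr).
    - intros x Hx. unfold F.
      pose proof (Y_derive x ltac:(lra)) as HYd.
      auto_derive; [repeat split; try (eexists; eauto); intro; nra|].
      change (fun y => Y z y) with (Y z).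
      rewrite (is_derive_unique _ _ _ HYd). unfold Rdiv. field. lra.
    - intros x Hx. specialize (Hrho x ltac:(lra)).
      pose proof (Y_pos x ltac:(lra)). pose proof (exp_pos (- (s * x + 8 / x))).
      apply Rmult_le_pos; [apply Rmult_le_pos|]; lra. }
  assert (HF1 : 0 < F r1) by (apply Rmult_lt_0_compat; [apply Y_pos; lra|apply exp_pos]).
  exists (F r1), r1. split; [exact HF1|split; [lra|]].
  intros r Hr. specialize (HF r Hr).
  assert (HYr : Y z r = F r * exp (s * r + 8 / r)).
  { unfold F. rewrite Rmult_assoc, <- exp_plus, Rplus_opp_l, exp_0. ring. }
  assert (exp (s * r) <= exp (s * r + 8 / r))
    by (apply exp_le_compat; assert (0 < 8 / r) by (apply Rdiv_lt_0_compat; lra); lra).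
  rewrite HYr. apply Rmult_le_compat; try lra; left; apply exp_pos.
Qed.

End Riccati.

Lemma z1_pos r : 0 < r -> 0 < z1 r.
Proof. intros Hr. pose proof (z1_ge_1 r ltac:(lra)). lra. Qed.

Lemma z1_bounds_near_0xp_sqrt2 : exists C M, 1 <= M /\
  forall r, M < r -> z1 r <= C * (/ sqrt r * exp (sqrt 2 * r)).
Proof.
  destruct (Y_le_exp z1 z1_solves z1_pos) as [C HC].
  destruct w_ge_1_minus_inv_sq as [M [HM Hw1]].
  exists (2 * C), M. split; [lra|]. intros r Hr.
  specialize (HC r ltac:(lra)). specialize (Hw1 r Hr).
  assert (/ r ^ 2 <= / 4) by (apply Rinv_le_contravar; simpl; nra).
  pose proof (sqrt_lt_R0 r ltac:(lra)). pose proof (z1_pos r ltac:(lra)). pose proof (w_pos_lt1 r ltac:(lra)).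
  pose proof (exp_pos (sqrt 2 * r)).
  unfold Y in HC.
  assert (Hsw : 0 < sqrt r * w r) by (apply Rmult_lt_0_compat; lra).
  apply Rmult_le_reg_r with (sqrt r * w r); [exact Hsw|].
  replace (2 * C * (/ sqrt r * exp (sqrt 2 * r)) * (sqrt r * w r))
    with (2 * w r * (C * exp (sqrt 2 * r))) by (field; lra).
  assert (1 <= 2 * w r) by lra.
  assert (z1 r * (sqrt r * w r) <= C * exp (sqrt 2 * r)) by lra.
  assert (0 < z1 r * (sqrt r * w r)) by (apply Rmult_lt_0_compat; lra).
  assert (0 <= (2 * w r - 1) * (C * exp (sqrt 2 * r))) by (apply Rmult_le_pos; lra).
  lra.
Qed.

(* Reduction of order: the Wronskian of [(r w^2 z')' = 2 r w^4 z] is a multiple of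
   [/ (r w^2)], so [z1 * reduction_integral] is a second solution. *)
Definition reduction_weight (r : R) : R := / (r * w r ^ 2 * z1 r ^ 2).

Definition reduction_integral (r : R) : R := RInt reduction_weight 1 r.

Lemma reduction_weight_pos r : 0 < r -> 0 < reduction_weight r.
Proof.
  intros Hr. pose proof (w_pos_lt1 r Hr). pose proof (z1_pos r Hr).
  apply Rinv_0_lt_compat, Rmult_lt_0_compat; [apply Rmult_lt_0_compat|]; try apply pow_lt; lra.
Qed.

Lemma reduction_weight_continuity r : 0 < r -> continuity_pt reduction_weight r.
Proof.
  intros Hr. pose proof (w_pos_lt1 r Hr). pose proof (z1_pos r Hr).
  apply continuity_pt_inv.
  - apply continuity_pt_mult; [apply continuity_pt_mult; [apply continuity_pt_id|]|];
      apply continuity_pt_pow_fun.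
    + apply w_continuity_pt. lra.
    + apply derivable_continuous_pt. eexists. apply is_derive_Reals, z1_derive, Hr.
  - apply Rgt_not_eq, Rmult_lt_0_compat; [apply Rmult_lt_0_compat|]; try apply pow_lt; lra.
Qed.

Lemma reduction_integral_derive r : 0 < r -> is_derive reduction_integral r (reduction_weight r).
Proof.
  intros Hr.
  apply (is_derive_RInt (V:=R_CompleteNormedModule) reduction_weight _ 1).
  - apply (locally_interval _ r 0 p_infty); simpl; auto.
    intros y Hy _. apply (RInt_correct (V:=R_CompleteNormedModule)).
    apply (ex_RInt_continuous (V:=R_CompleteNormedModule)).
    intros x [Hx _]. apply continuity_pt_filterlim, reduction_weight_continuity.
    eapply Rlt_le_trans; [|exact Hx]. apply Rmin_glb_lt; lra.
  - apply continuity_pt_filterlim, reduction_weight_continuity, Hr.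
Qed.

Lemma reduction_integral_1 : reduction_integral 1 = 0.
Proof. apply (RInt_point (V:=R_CompleteNormedModule)). Qed.

Lemma reduction_integral_nondecr a b : 0 < a <= b -> reduction_integral a <= reduction_integral b.
Proof.
  intros Hab. apply (nondecr_of_is_derive _ reduction_weight); [lra| |].
  - intros x Hx. apply reduction_integral_derive. lra.
  - intros x Hx. left. apply reduction_weight_pos. lra.
Qed.

Lemma reduction_integral_near_0 : exists K, forall r, 0 < r <= 1 -> - reduction_integral r <= K / r ^ 2.
Proof.
  destruct w_ge_linear as [c [Hc Hlow]].
  set (K := / (2 * c ^ 2)).
  assert (HK : 0 < K) by (apply Rinv_0_lt_compat; nra).
  exists K. intros r Hr.
  set (H := fun t => reduction_integral t + K / t ^ 2).
  enough (H 1 <= H r) by (unfold H in *; rewrite reduction_integral_1, pow1 in *; lra).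
  apply (nonincr_of_is_derive H (fun t => reduction_weight t - / c ^ 2 * / t ^ 3) r 1); [lra| |].
  - intros x Hx. unfold H.
    pose proof (reduction_integral_derive x ltac:(lra)) as Hd.
    auto_derive; [repeat split; try (eexists; eauto); intro; nra|].
    change (fun y => reduction_integral y) with reduction_integral.
    rewrite (is_derive_unique _ _ _ Hd). unfold K. field. split; lra.
  - intros x Hx. unfold reduction_weight.
    specialize (Hlow x ltac:(lra)). pose proof (z1_ge_1 x ltac:(lra)).
    assert (0 < c * x) by nra.
    assert (Hb : c ^ 2 * x ^ 3 <= x * w x ^ 2 * z1 x ^ 2).
    { assert ((c * x) ^ 2 <= w x ^ 2) by (apply pow_incr; lra).
      assert (1 <= z1 x ^ 2) by (simpl; nra).
      replace (c ^ 2 * x ^ 3) with (x * (c * x) ^ 2 * 1) by ring.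
      apply Rmult_le_compat; try nra. }
    assert (0 < c ^ 2 * x ^ 3) by (apply Rmult_lt_0_compat; apply pow_lt; lra).
    assert (Hinv : / (x * w x ^ 2 * z1 x ^ 2) <= / (c ^ 2 * x ^ 3)) by (apply Rinv_le_contravar; lra).
    rewrite (Rinv_mult (c ^ 2)) in Hinv. lra.
Qed.

Lemma reduction_weight_eq r : 0 < r -> reduction_weight r = / Y z1 r ^ 2.
Proof.
  intros Hr. unfold reduction_weight, Y. f_equal.
  rewrite <- (sqrt_sqrt r) at 1 by lra. ring.
Qed.

Lemma reduction_integral_tail : exists K M, 0 <= K /\ 1 <= M /\
  forall r t, M <= r <= t -> reduction_integral t <= reduction_integral r + K * exp (- (2 * sqrt 2 * r)).
Proof.
  destruct (Y_ge_exp z1 z1_solves z1_pos z1_Derive_nonneg) as [c [M [Hc [HM HY]]]].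
  pose proof sqrt2_bounds as Hs2. set (s := sqrt 2) in *.
  set (K := / (2 * s * c ^ 2)).
  assert (HK : 0 < K) by (apply Rinv_0_lt_compat, Rmult_lt_0_compat; [lra|apply pow_lt; lra]).
  exists K, M. split; [lra|split; [exact HM|]].
  intros r t Hrt.
  set (H := fun t => reduction_integral t + K * exp (- (2 * s * t))).
  enough (H t <= H r) by (unfold H in *; pose proof (exp_pos (- (2 * s * t))); nra).
  apply (nonincr_of_is_derive H (fun t => reduction_weight t - / c ^ 2 * exp (- (2 * s * t))) r t); [lra| |].
  - intros x Hx. unfold H.
    pose proof (reduction_integral_derive x ltac:(lra)) as Hd.
    auto_derive; [eexists; eauto|].
    change (fun y => reduction_integral y) with reduction_integral.
    rewrite (is_derive_unique _ _ _ Hd). unfold K. field. split; lra.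
  - intros x Hx. rewrite reduction_weight_eq by lra.
    specialize (HY x ltac:(lra)). pose proof (exp_pos (s * x)).
    assert (0 < c * exp (s * x)) by (apply Rmult_lt_0_compat; lra).
    replace (exp (- (2 * s * x))) with (/ exp (s * x) ^ 2)
      by (rewrite exp_Ropp; f_equal; simpl; rewrite Rmult_1_r, <- exp_plus; f_equal; ring).
    assert (Hinv : / Y z1 x ^ 2 <= / (c * exp (s * x)) ^ 2)
      by (apply Rinv_le_contravar; [apply pow_lt; lra|apply pow_incr; lra]).
    rewrite Rpow_mult_distr, Rinv_mult in Hinv. lra.
Qed.

Definition reduction_limit : R := real (Lim_seq (fun n => reduction_integral (INR n + 1))).

Lemma reduction_limit_spec : exists K M, 0 <= K /\ 1 <= M /\
  (forall r, 0 < r -> reduction_integral r <= reduction_limit) /\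
  (forall r, M <= r -> reduction_limit <= reduction_integral r + K * exp (- (2 * sqrt 2 * r))).
Proof.
  destruct reduction_integral_tail as [K [M [HK [HM Ht]]]].
  set (u := fun n => reduction_integral (INR n + 1)).
  assert (Hpos : forall n, 0 < INR n + 1) by (intros n; pose proof (pos_INR n); lra).
  assert (Hinc : forall n, u n <= u (S n)).
  { intros n. apply reduction_integral_nondecr. rewrite S_INR. specialize (Hpos n). lra. }
  assert (Hbound : forall r, M <= r -> forall n, u n <= reduction_integral r + K * exp (- (2 * sqrt 2 * r))).
  { intros r Hr n. unfold u. pose proof (exp_pos (- (2 * sqrt 2 * r))).
    destruct (Rle_lt_dec r (INR n + 1)) as [Hl|Hl]; [apply Ht; lra|].
    assert (reduction_integral (INR n + 1) <= reduction_integral r)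
      by (apply reduction_integral_nondecr; specialize (Hpos n); lra).
    nra. }
  destruct (ex_finite_lim_seq_incr u _ Hinc (Hbound M (Rle_refl M))) as [L HL].
  assert (HLe : reduction_limit = L) by (unfold reduction_limit; fold u; rewrite (is_lim_seq_unique _ _ HL); reflexivity).
  rewrite HLe.
  exists K, M. split; [exact HK|split; [exact HM|split]].
  - intros r Hr. destruct (INR_unbounded r) as [n Hn].
    apply Rle_trans with (u n).
    + apply reduction_integral_nondecr. lra.
    + apply (is_lim_seq_incr_compare u L HL Hinc n).
  - intros r Hr.
    apply (is_lim_seq_le u (fun _ => reduction_integral r + K * exp (- (2 * sqrt 2 * r))) L _
             (Hbound r Hr) HL (is_lim_seq_const _)).
Qed.

Section SecondSolution.

Variable L : R.

Let zL (r : R) : R := z1 r * (L - reduction_integral r).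

Let zL_derive r : 0 < r ->
  is_derive zL r (Derive z1 r * (L - reduction_integral r) - z1 r * reduction_weight r).
Proof.
  intros Hr. pose proof (reduction_integral_derive r Hr) as HI.
  unfold zL. auto_derive; [repeat split; [eexists; apply z1_derive, Hr|eexists; exact HI]|].
  change (fun x => z1 x) with z1. change (fun x => reduction_integral x) with reduction_integral.
  rewrite (is_derive_unique _ _ _ HI). ring.
Qed.

Let zL_derive2 r : 0 < r ->
  is_derive (Derive zL) r
    (Derive (Derive z1) r * (L - reduction_integral r) - 2 * Derive z1 r * reduction_weight r
     + z1 r * reduction_weight r ^ 2 * (w r ^ 2 * z1 r ^ 2 + r * (2 * w r * Derive w r) * z1 r ^ 2
                                          + r * w r ^ 2 * (2 * z1 r * Derive z1 r))).
Proof.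
  intros Hr. pose proof (w_pos_lt1 r Hr). pose proof (z1_pos r Hr).
  apply (is_derive_ext_loc (fun r => Derive z1 r * (L - reduction_integral r) - z1 r * reduction_weight r)).
  { apply (locally_interval _ r 0 p_infty); simpl; auto.
    intros y Hy _. symmetry. apply is_derive_unique, zL_derive, Hy. }
  pose proof (reduction_integral_derive r Hr) as HI.
  destruct (proj1 z1_solves r Hr) as [Hz1 Hz2]. pose proof (w_ex_derive r Hr).
  unfold reduction_weight. auto_derive.
  - repeat split; auto; [eexists; exact HI|].
    assert (0 < w r ^ 2 * z1 r ^ 2) by (apply Rmult_lt_0_compat; apply pow_lt; lra).
    intros Habs. simpl in *. nra.
  - change (fun x => z1 x) with z1. change (fun x => reduction_integral x) with reduction_integral.
    change (fun x => w x) with w. change (fun x => Derive z1 x) with (Derive z1).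
    rewrite (is_derive_unique _ _ _ HI). unfold reduction_weight. field.
    assert (0 < w r ^ 2 * z1 r ^ 2) by (apply Rmult_lt_0_compat; apply pow_lt; lra).
    repeat split; lra.
Qed.

Lemma reduction_of_order_solves : solves_z_ode w zL.
Proof.
  split.
  - intros r Hr. split; eexists; [apply zL_derive|apply zL_derive2]; exact Hr.
  - intros r Hr. pose proof (w_pos_lt1 r Hr). pose proof (z1_pos r Hr).
    rewrite (is_derive_unique _ _ _ (zL_derive2 r Hr)), (is_derive_unique _ _ _ (zL_derive r Hr)).
    pose proof (proj2 z1_solves r Hr) as Ho.
    replace (Derive (Derive z1) r) with (- ((2 * Derive w r / w r + / r) * Derive z1 r) + 2 * w r ^ 2 * z1 r) by lra.
    unfold reduction_weight. unfold zL. field. repeat split; lra.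
Qed.

End SecondSolution.

Definition z2 (r : R) : R := z1 r * (reduction_limit - reduction_integral r).

Lemma z2_solves : solves_z_ode w z2.
Proof. exact (reduction_of_order_solves reduction_limit). Qed.

Lemma z1_bounds_near_0 r : 0 < r <= 1 -> 1 <= z1 r <= exp 1.
Proof.
  intros Hr. split; [apply z1_ge_1; lra|].
  eapply Rle_trans; [apply z1_bounds_near_0xp; lra|]. apply exp_le_compat. simpl. nra.
Qed.

Lemma z1_bigO_0 : bigO_at_0plus z1 (fun _ => 1).
Proof.
  exists (exp 1), 1. split; [lra|]. intros r Hr.
  destruct (z1_bounds_near_0 r ltac:(lra)). rewrite Rabs_R1, Rmult_1_r, Rabs_pos_eq; lra.
Qed.

Lemma z1_bigO_infty : bigO_at_infty z1 (fun r => / sqrt r * exp (sqrt 2 * r)).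
Proof.
  destruct z1_bounds_near_0xp_sqrt2 as [C [M [HM Hu]]].
  exists C, M. intros r Hr. specialize (Hu r Hr).
  pose proof (z1_pos r ltac:(lra)). pose proof (sqrt_lt_R0 r ltac:(lra)).
  pose proof (exp_pos (sqrt 2 * r)). pose proof (Rinv_0_lt_compat _ H0).
  rewrite !Rabs_pos_eq; [exact Hu|apply Rmult_le_pos|]; lra.
Qed.

Lemma z2_bigO_0 : bigO_at_0plus z2 (fun r => / (r ^ 2)).
Proof.
  destruct reduction_limit_spec as [_ [_ [_ [_ [HL _]]]]].
  destruct reduction_integral_near_0 as [K HK].
  set (L := reduction_limit) in *.
  exists (exp 1 * (Rabs L + Rabs K)), 1. split; [lra|]. intros r Hr.
  destruct (z1_bounds_near_0 r ltac:(lra)) as [Hz1 Hze].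
  specialize (HL r ltac:(lra)). specialize (HK r ltac:(lra)).
  assert (Hr2 : 0 < r ^ 2 <= 1) by (split; [apply pow_lt|simpl]; nra).
  assert (Hir : 1 <= / r ^ 2) by (rewrite <- Rinv_1; apply Rinv_le_contravar; lra).
  unfold z2. fold L.
  rewrite Rabs_pos_eq with (x := / r ^ 2) by (left; apply Rinv_0_lt_compat; lra).
  rewrite Rabs_mult, !Rabs_pos_eq by lra.
  assert (HT : L - reduction_integral r <= (Rabs L + Rabs K) * / r ^ 2).
  { pose proof (Rle_abs L). pose proof (Rle_abs K). pose proof (Rabs_pos L).
    unfold Rdiv in HK. nra. }
  pose proof (exp_pos 1).
  apply Rle_trans with (exp 1 * (L - reduction_integral r)); [apply Rmult_le_compat_r; lra|].
  rewrite Rmult_assoc. apply Rmult_le_compat_l; lra.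
Qed.

Lemma z2_bigO_infty : bigO_at_infty z2 (fun r => / sqrt r * exp (- (sqrt 2 * r))).
Proof.
  destruct reduction_limit_spec as [K [M [_ [HM [HL1 HL2]]]]].
  destruct z1_bounds_near_0xp_sqrt2 as [C [Mu [HMu Hu]]].
  set (L := reduction_limit) in *.
  exists (C * K), (Rmax M Mu). intros r Hr. apply Rmax_Rlt in Hr as [HrM HrMu].
  specialize (Hu r HrMu). specialize (HL2 r ltac:(lra)). specialize (HL1 r ltac:(lra)).
  pose proof (z1_pos r ltac:(lra)). pose proof (sqrt_lt_R0 r ltac:(lra)).
  assert (Hi : 0 < / sqrt r) by (apply Rinv_0_lt_compat; lra).
  pose proof (exp_pos (sqrt 2 * r)). pose proof (exp_pos (- (sqrt 2 * r))).
  pose proof (exp_pos (- (2 * sqrt 2 * r))).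
  unfold z2. fold L.
  rewrite Rabs_mult, !Rabs_pos_eq by (try apply Rmult_le_pos; lra).
  assert (Hee : exp (sqrt 2 * r) * exp (- (2 * sqrt 2 * r)) = exp (- (sqrt 2 * r)))
    by (rewrite <- exp_plus; f_equal; ring).
  apply Rle_trans with (C * (/ sqrt r * exp (sqrt 2 * r)) * (K * exp (- (2 * sqrt 2 * r)))).
  - apply Rmult_le_compat; lra.
  - right. rewrite <- Hee. ring.
Qed.

Lemma z1_z2_lin_indep : lin_indep_pos z1 z2.
Proof.
  intros c1 c2 H.
  pose proof (H 1 ltac:(lra)) as H1. pose proof (H 2 ltac:(lra)) as H2.
  unfold z2 in H1, H2. rewrite reduction_integral_1 in H1.
  pose proof (z1_pos 1 ltac:(lra)). pose proof (z1_pos 2 ltac:(lra)).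
  assert (E1 : c1 + c2 * reduction_limit = 0) by (apply Rmult_eq_reg_l with (z1 1); lra).
  assert (E2 : c1 + c2 * (reduction_limit - reduction_integral 2) = 0)
    by (apply Rmult_eq_reg_l with (z1 2); lra).
  assert (HI : 0 < reduction_integral 2).
  { rewrite <- reduction_integral_1.
    apply (incr_function_le reduction_integral 1 2 reduction_weight); simpl; try lra.
    - intros x Hx1 Hx2. apply reduction_integral_derive. lra.
    - intros x Hx1 Hx2. apply reduction_weight_pos. lra. }
  assert (Hc2 : c2 * reduction_integral 2 = 0) by lra.
  apply Rmult_integral in Hc2 as [->|Hc2]; [split; lra|lra].
Qed.

End Profile.

Theorem lemma2p2 (w : R -> R) (Hw : is_profile w) :
  exists z1 z2 : R -> R,
    solves_z_ode w z1 /\ solves_z_ode w z2 /\ lin_indep_pos z1 z2 /\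
    bigO_at_0plus z1 (fun _ => 1) /\
    bigO_at_infty z1 (fun r => / sqrt r * exp (sqrt 2 * r)) /\
    bigO_at_0plus z2 (fun r => / (r ^ 2)) /\
    bigO_at_infty z2 (fun r => / sqrt r * exp (- (sqrt 2 * r))).
Proof.
  exists (z1 w), (z2 w).
  split; [exact (z1_solves w Hw)|].
  split; [exact (z2_solves w Hw)|].
  split; [exact (z1_z2_lin_indep w Hw)|].
  split; [exact (z1_bigO_0 w Hw)|].
  split; [exact (z1_bigO_infty w Hw)|].
  split; [exact (z2_bigO_0 w Hw)|].
  exact (z2_bigO_infty w Hw).
Qed.
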